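(* Let $S\subseteq\mathbb{R}^n\times\mathbb{R}^m$ be convex, let (MOCP) be bounded and fix $p\in[1,\infty]$. If $\bar S\subseteq S$ is a Hausdorff-type finite $\epsilon$-solution of (MOCP), then $\bar S$ is a finite $(\|Q\|\epsilon)$-solution of (CP), where $\|Q\|=(m^{p-1}+1)^{1/p}$ (equal to $m$ for $p=\infty$).
   Context: $\|\cdot\|$ is the $p$-norm, $B_\epsilon$ its closed $\epsilon$-ball. (CP): compute $Y=\{y:\exists x,(x,y)\in S\}$; for bounded (CP) a nonempty finite $\bar S\subseteq S$ is a finite $\epsilon$-solution if $Y\subseteq\operatorname{conv}\operatorname{proj}_y[\bar S]+B_\epsilon$. $P(x,y)=(y,-\mathbf{1}^\top y)$, $Qy=(y,-\mathbf{1}^\top y)$, $\mathbf{1}\in\mathbb{R}^m$ all-ones; $\|Q\|$ is the operator norm induced by the $p$-norms. (MOCP): minimize $P(x,y)$ w.r.t. $\le_{\mathbb{R}^{m+1}_+}$ over $(x,y)\in S$, upper image $\mathcal{P}=\operatorname{cl}(P[S]+\mathbb{R}^{m+1}_+)$; bounded means $\mathcal{P}\subseteq\{q\}+\mathbb{R}^{m+1}_+$ for some $q$. Hausdorff distance $d_H(A_1,A_2)=\max\{\sup_{a_1\in A_1}\inf_{a_2\in A_2}\|a_1-a_2\|,\sup_{a_2\in A_2}\inf_{a_1\in A_1}\|a_1-a_2\|\}$. A nonempty finite $\bar S\subseteq S$ is a Hausdorff-type finite $\epsilon$-solution of (MOCP) if $d_H(\mathcal{P},\operatorname{conv}P[\bar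 S]+\mathbb{R}^{m+1}_+)\le\epsilon$. *)

From HB Require Import structures.
From mathcomp Require Import all_boot all_order all_algebra.
From mathcomp Require Import all_classical all_reals all_analysis.
Set Implicit Arguments. Unset Strict Implicit. Unset Printing Implicit Defensive.
Import Order.TTheory GRing.Theory Num.Theory.
Import numFieldNormedType.Exports.
Local Open Scope classical_set_scope.
Local Open Scope ring_scope.

Section Defs.
Variable R : realType.

Definition pnorm (p : \bar R) (k : nat) (x : 'rV[R]_k) : R :=
  if p == +oo%E then \big[Num.max/0]_(i < k) `|x 0 i|
  else (\sum_(i < k) `|x 0 i| `^ fine p) `^ (fine p)^-1.

Definition hausdorff (p : \bar R) (k : nat) (A1 A2 : set 'rV[R]_k) : \bar R :=
  Order.max
    (ereal_sup [set ereal_inf [set (pnorm p (a1 - a2))%:E | a2 in A2] | a1 in A1])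
    (ereal_sup [set ereal_inf [set (pnorm p (a1 - a2))%:E | a1 in A1] | a2 in A2]).

Definition conv (k : nat) (A : set 'rV[R]_k) : set 'rV[R]_k :=
  [set z | exists (N : nat) (w : 'I_N -> R) (a : 'I_N -> 'rV[R]_k),
     (forall i, 0 <= w i) /\ \sum_(i < N) w i = 1 /\ (forall i, A (a i)) /\
     z = \sum_(i < N) w i *: a i].

Definition msum (k : nat) (A B : set 'rV[R]_k) : set 'rV[R]_k :=
  [set a + b | a in A & b in B].

Definition orthant (k : nat) : set 'rV[R]_k := [set d | forall i, 0 <= d 0 i].

Definition pball (p : \bar R) (k : nat) (e : R) : set 'rV[R]_k :=
  [set z | pnorm p z <= e].

Definition convex_set2 (n m : nat) (S : set ('rV[R]_n * 'rV[R]_m)) : Prop :=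
  forall u v, S u -> S v -> forall t : R, 0 <= t <= 1 ->
    S (t *: u.1 + (1 - t) *: v.1, t *: u.2 + (1 - t) *: v.2).

Definition Qmap (m : nat) (y : 'rV[R]_m) : 'rV[R]_(m + 1) :=
  row_mx y (const_mx (- \sum_(j < m) y 0 j)).

Definition Pmap (n m : nat) (xy : 'rV[R]_n * 'rV[R]_m) : 'rV[R]_(m + 1) :=
  Qmap xy.2.

Definition upper_image (n m : nat) (S : set ('rV[R]_n * 'rV[R]_m))
  : set 'rV[R]_(m + 1) :=
  closure (msum (@Pmap n m @` S) (@orthant (m + 1))).

Definition mocp_bounded (n m : nat) (S : set ('rV[R]_n * 'rV[R]_m)) : Prop :=
  exists q : 'rV[R]_(m + 1), upper_image S `<=` msum [set q] (@orthant (m + 1)).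

Definition hausdorff_finite_sol (p : \bar R) (n m : nat)
  (S Sbar : set ('rV[R]_n * 'rV[R]_m)) (eps : R) : Prop :=
  [/\ Sbar !=set0, finite_set Sbar, Sbar `<=` S &
      (hausdorff p (upper_image S) (msum (conv (@Pmap n m @` Sbar)) (@orthant (m + 1)))
        <= eps%:E)%E].

Definition Yset (n m : nat) (S : set ('rV[R]_n * 'rV[R]_m)) : set 'rV[R]_m :=
  snd @` S.

Definition cp_finite_sol (p : \bar R) (n m : nat)
  (S Sbar : set ('rV[R]_n * 'rV[R]_m)) (eps : R) : Prop :=
  [/\ Sbar !=set0, finite_set Sbar, Sbar `<=` S &
      Yset S `<=` msum (conv (snd @` Sbar)) (pball p eps)].

Definition normQ (p : \bar R) (m : nat) : R :=
  if p == +oo%E then m%:R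
  else (m%:R `^ (fine p - 1) + 1) `^ (fine p)^-1.

End Defs.

From Pilot Require Import Defs.
From HB Require Import structures.
From mathcomp Require Import all_boot all_order all_algebra.
From mathcomp Require Import all_classical all_reals all_analysis.
From mathcomp Require Import lra.
Import Order.TTheory GRing.Theory Num.Theory.
Import numFieldNormedType.Exports.
Set Implicit Arguments. Unset Strict Implicit. Unset Printing Implicit Defensive.
Local Open Scope classical_set_scope.
Local Open Scope ring_scope.

(* Let y be in Y, say (x, y) in S.  Then Q y = P (x, y) lies in the upper image
   of (MOCP), so the Hausdorff bound puts it within eps + e of
   conv P[Sbar] + R^{m+1}_+ for every e > 0.  Since Q is linear, the points of
   this set are of the form Q z + d with z in conv proj_y[Sbar] and d >= 0.
   The key estimate (pnorm_le_normQ) says that ||w||_p <= ||Q|| ||Q w - d||_p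
   for every w and every d >= 0; with w = y - z it yields points z of the
   convex hull with ||y - z||_p <= ||Q|| eps + e.  Finally the distance from y
   to the convex hull of a finite set is attained (continuity of the p-norm,
   compactness of the standard simplex), which gives the exact bound. *)

Section PowerInequalities.
Variables (R : realType) (q : R).
Hypothesis q_ge1 : 1 <= q.

Let q_gt0 : 0 < q. Proof. exact: lt_le_trans ltr01 q_ge1. Qed.

Lemma powR_convex2 (t a b : R) : 0 <= t <= 1 -> 0 <= a -> 0 <= b ->
  (t * a + (1 - t) * b) `^ q <= t * a `^ q + (1 - t) * b `^ q.
Proof.
move=> /andP[t0 t1] a0 b0.
have := @convex_powR R q q_ge1 (Itv01 t0 t1) a b.
by rewrite !inE /= !in_itv /= !andbT !convRE; apply.
Qed.

Lemma powR_superadditive (x y : R) : 0 <= x -> 0 <= y ->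
  x `^ q + y `^ q <= (x + y) `^ q.
Proof.
move=> x0 y0.
rewrite -(mulr_powRB1 x0 q_gt0) -(mulr_powRB1 y0 q_gt0).
rewrite -(mulr_powRB1 (addr_ge0 x0 y0) q_gt0) mulrDl.
by apply: lerD; apply: ler_wpM2l => //; apply: ge0_ler_powR;
  rewrite ?subr_ge0 ?nnegrE ?addr_ge0 ?lerDl ?lerDr.
Qed.

Lemma powR_sum_superadditive (I : finType) (P : pred I) (F : I -> R) :
  (forall i, P i -> 0 <= F i) ->
  \sum_(i | P i) F i `^ q <= (\sum_(i | P i) F i) `^ q.
Proof.
move=> F0; pose K (a b : R) := 0 <= b /\ a <= b `^ q.
suff [] : K (\sum_(i | P i) F i `^ q) (\sum_(i | P i) F i) by [].
apply: big_rec2; first by split; rewrite ?powR_ge0.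
move=> i y1 y2 Pi [y20 h]; split; first by rewrite addr_ge0 ?F0.
by apply: le_trans (powR_superadditive (F0 _ Pi) y20); rewrite lerD2l.
Qed.

(* Write a + b as (k + 1) times the convex
   combination of a and b / k with weight 1 / (k + 1). *)
Lemma power_mean_step (k a b B : R) : 0 < k -> 0 <= a -> 0 <= b ->
  b `^ q <= k `^ (q - 1) * B ->
  (a + b) `^ q <= (k + 1) `^ (q - 1) * (a `^ q + B).
Proof.
move=> k0 a0 b0 bB; have k1 : 0 < k + 1 by rewrite addr_gt0.
set t := (k + 1)^-1.
have t01 : 0 <= t <= 1 by rewrite /t invr_ge0 ltW //= invf_le1 // lerDr ltW.
have bk0 : 0 <= b / k by rewrite divr_ge0 // ltW.
have -> : a + b = (k + 1) * (t * a + (1 - t) * (b / k)).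
  rewrite mulrDr mulrA mulfV ?gt_eqF // mul1r; congr (_ + _).
  rewrite mulrA mulrBr mulr1 mulfV ?gt_eqF // addrK mulrC mulfVK ?gt_eqF //.
have c0 : 0 <= t * a + (1 - t) * (b / k).
  by case/andP: t01 => t0 t1; rewrite addr_ge0 // mulr_ge0 // subr_ge0.
rewrite powRM ?(ltW k1) //.
apply: le_trans (ler_wpM2l (powR_ge0 _ _) (powR_convex2 t01 a0 bk0)) _.
rewrite -(mulr_powRB1 (ltW k1) q_gt0) [_ * (k + 1) `^ _]mulrC -mulrA.
apply: ler_wpM2l; first exact: powR_ge0.
rewrite mulrDr !mulrA mulfV ?gt_eqF // mul1r mulrBr mulr1 mulfV ?gt_eqF //.
rewrite addrK lerD2l.
(* k * (b / k) ^ q <= B, since multiplying by k ^ (q - 1) gives b ^ q *)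
have kq0 : 0 < k `^ (q - 1) by rewrite powR_gt0.
rewrite -(ler_pM2l kq0) mulrA [k `^ _ * k]mulrC (mulr_powRB1 (ltW k0) q_gt0).
by rewrite -powRM ?(ltW k0) // [k * _]mulrC divfK ?gt_eqF.
Qed.

Lemma power_mean (r : seq R) : (forall x, x \in r -> 0 <= x) ->
  (\sum_(x <- r) x) `^ q <= (size r)%:R `^ (q - 1) * \sum_(x <- r) x `^ q.
Proof.
elim: r => [|x r IH] r0; first by rewrite !big_nil powR0 ?gt_eqF // mulr0.
have x0 : 0 <= x by apply: r0; rewrite inE eqxx.
have {}IH := IH (fun z zr => r0 z (mem_behead (s := x :: r) zr)).
rewrite !big_cons; case: r r0 IH => [|y r] r0 IH.
  by rewrite !big_nil !addr0 /= mulr1n powR1 mul1r.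
rewrite [size _]/= -addn1 natrD.
apply: power_mean_step => //.
by rewrite big_seq sumr_ge0 // => z zr; apply: r0; rewrite inE zr orbT.
Qed.

End PowerInequalities.

Section QmapFacts.
Variables (R : realType) (m : nat).

Lemma QmapEl (w : 'rV[R]_m) (i : 'I_m) : Qmap w 0 (lshift 1 i) = w 0 i.
Proof. by rewrite /Qmap row_mxEl. Qed.

Lemma QmapEr (w : 'rV[R]_m) (j : 'I_1) :
  Qmap w 0 (rshift m j) = - \sum_(i < m) w 0 i.
Proof. by rewrite /Qmap row_mxEr mxE. Qed.

Lemma Qmap_is_linear : linear (@Qmap R m).
Proof.
move=> a u v; rewrite /Qmap scale_row_mx add_row_mx; congr row_mx.
apply/matrixP => i j; rewrite !mxE mulrN -opprD mulr_sumr -big_split /=.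
by congr (- _); apply: eq_bigr => k _; rewrite !mxE.
Qed.

HB.instance Definition _ :=
  GRing.isLinear.Build R 'rV[R]_m 'rV[R]_(m + 1) *:%R (@Qmap R m) Qmap_is_linear.

End QmapFacts.

Section KeyEstimate.
Variables (R : realType) (m : nat) (w : 'rV[R]_m) (d : 'rV[R]_(m + 1)).
Hypothesis d_ge0 : forall i, 0 <= d 0 i.

Let u := Qmap w - d.
Let b (i : 'I_m) := `|u 0 (lshift 1 i)|.
Let a := `|u 0 (rshift m ord0)|.
Let b_ge0 i : 0 <= b i. Proof. exact: normr_ge0. Qed.

Lemma neg_coord_le (i : 'I_m) : - w 0 i <= b i.
Proof.
rewrite /b /u mxE QmapEl mxE -normrN; apply: le_trans (ler_norm _).
by rewrite lerN2 gerBl.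
Qed.

Lemma sum_coord_le : \sum_(i < m) w 0 i <= a.
Proof.
rewrite /a /u mxE QmapEr mxE -normrN; apply: le_trans (ler_norm _).
by rewrite opprB opprK lerDr.
Qed.

Let neg := [pred i : 'I_m | w 0 i < 0].

Lemma pos_part_le : \sum_(i < m | ~~ neg i) w 0 i <= a + \sum_(i < m | neg i) b i.
Proof.
have := sum_coord_le; rewrite (bigID neg) /= => h.
have : \sum_(i < m | neg i) (- w 0 i) <= \sum_(i < m | neg i) b i.
  by apply: ler_sum => i _; exact: neg_coord_le.
rewrite sumrN; lra.
Qed.

Section FiniteExponent.
Variable q : R.
Hypothesis q_ge1 : 1 <= q.

Let q_gt0 : 0 < q. Proof. exact: lt_le_trans ltr01 q_ge1. Qed.

Let negB := \sum_(i < m | neg i) b i `^ q.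
Let M := m%:R `^ (q - 1).
Let negB_ge0 : 0 <= negB. Proof. by rewrite sumr_ge0 // => *; rewrite powR_ge0. Qed.
Let M_ge0 : 0 <= M. Proof. exact: powR_ge0. Qed.

Lemma neg_part_powR_le : \sum_(i < m | neg i) `|w 0 i| `^ q <= negB.
Proof.
apply: ler_sum => i /= wi0.
apply: ge0_ler_powR; rewrite ?nnegrE ?b_ge0 ?(ltW q_gt0) //.
by rewrite ltr0_norm //; exact: neg_coord_le.
Qed.

(* The positive coordinates of w: superadditivity of t ^ q, then the
   power-mean inequality for the at most m terms of pos_part_le. *)
Lemma pos_part_powR_le :
  \sum_(i < m | ~~ neg i) `|w 0 i| `^ q <= M * (a `^ q + negB).
Proof.
have [[i0 /= Hi0] | Hn] := pselect (exists i, ~~ neg i); last first.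
  rewrite big1 => [|i Hi]; last by case: Hn; exists i.
  by rewrite mulr_ge0 ?addr_ge0 ?powR_ge0.
have wpos i : ~~ neg i -> 0 <= w 0 i by rewrite /= -leNgt.
rewrite (eq_bigr (fun i => w 0 i `^ q)); last by move=> i /wpos /ger0_norm ->.
apply: le_trans (powR_sum_superadditive q_ge1 wpos) _.
pose r := a :: [seq b i | i <- enum neg].
have r0 x : x \in r -> 0 <= x.
  by rewrite inE => /orP[/eqP -> | /mapP [i _ ->]]; exact: normr_ge0.
have rE : a + \sum_(i < m | neg i) b i = \sum_(x <- r) x.
  by rewrite big_cons big_map big_enum.
have rqE : a `^ q + negB = \sum_(x <- r) x `^ q.
  by rewrite big_cons big_map big_enum.
have size_r : (size r <= m)%N.
  rewrite /= size_map -cardE -[m in (_ <= m)%N]card_ord -(cardC neg).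
  by rewrite -addn1 leq_add2l; apply/card_gt0P; exists i0.
apply: le_trans (ge0_ler_powR (ltW q_gt0) _ _ pos_part_le) _.
- by rewrite nnegrE sumr_ge0.
- by rewrite nnegrE rE big_seq sumr_ge0.
rewrite rE rqE; apply: le_trans (power_mean q_ge1 r0) _.
apply: ler_wpM2r; first by rewrite sumr_ge0 // => *; rewrite powR_ge0.
by apply: ge0_ler_powR; rewrite ?nnegrE ?subr_ge0 ?ler0n ?ler_nat.
Qed.

Lemma key_estimate_powR :
  \sum_(i < m) `|w 0 i| `^ q <= (M + 1) * \sum_(j < m + 1) `|u 0 j| `^ q.
Proof.
rewrite big_split_ord big_ord1 -/a (bigID neg) /=.
set B := \sum_(i < m) _.
have negB_le : negB <= B.
  rewrite /B [X in _ <= X](bigID neg) /= lerDl.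
  by rewrite sumr_ge0 // => *; rewrite powR_ge0.
have := neg_part_powR_le; have := pos_part_powR_le; have := M_ge0.
have : 0 <= a `^ q by rewrite powR_ge0.
nra.
Qed.

End FiniteExponent.

Lemma key_estimate_inf : pnorm +oo%E w <= m%:R * pnorm +oo%E u.
Proof.
rewrite /pnorm eqxx; set M := \big[Num.max/0]_(j < m + 1) `|u 0 j|.
have uM j : `|u 0 j| <= M by exact: le_bigmax.
have M0 : 0 <= M by apply: le_trans (uM (rshift m ord0)).
apply: bigmax_le; first by rewrite mulr_ge0.
move=> i _; have m1 : 1 <= m%:R :> R by rewrite ler1n (leq_ltn_trans _ (ltn_ord i)).
rewrite ler_norml; apply/andP; split.
  rewrite lerNl; apply: le_trans (neg_coord_le i) _; apply: le_trans (uM _) _.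
  by rewrite ler_peMl.
(* w_i is the total sum minus the other coordinates, each bounded by M *)
have -> : w 0 i = \sum_(j < m) w 0 j + \sum_(j < m | j != i) (- w 0 j).
  by rewrite (bigD1 i) //= sumrN addrK.
have : \sum_(j < m | j != i) (- w 0 j) <= \sum_(j < m | j != i) M.
  by apply: ler_sum => j _; apply: le_trans (neg_coord_le j) (uM _).
have : \sum_(j < m) M = M + \sum_(j < m | j != i) M by rewrite (bigD1 i).
have : \sum_(j < m) M = m%:R * M by rewrite sumr_const card_ord mulr_natl.
have := le_trans sum_coord_le (uM _).
lra.
Qed.

End KeyEstimate.

(* With d = 0 this is the operator-norm bound for Q; the general form says that
   adding the orthant to Q w cannot bring it closer to 0 than ||w|| / ||Q||. *)
Lemma pnorm_le_normQ (R : realType) (p : \bar R) m (w : 'rV[R]_m)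
    (d : 'rV[R]_(m + 1)) : (1 <= p)%E -> (forall i, 0 <= d 0 i) ->
  pnorm p w <= normQ p m * pnorm p (Qmap w - d).
Proof.
case: p => [q| |] // p1 d0; last by rewrite /normQ eqxx; exact: key_estimate_inf.
have q_ge1 : 1 <= q by rewrite -lee_fin.
have q_gt0 : 0 < q by exact: lt_le_trans ltr01 q_ge1.
have S0 k (v : 'rV[R]_k) : 0 <= \sum_(i < k) `|v 0 i| `^ q.
  by rewrite sumr_ge0 // => *; rewrite powR_ge0.
rewrite /normQ /pnorm /= -powRM ?addr_ge0 ?powR_ge0 ?S0 //.
apply: ge0_ler_powR;
  rewrite ?nnegrE ?invr_ge0 ?(ltW q_gt0) ?mulr_ge0 ?addr_ge0 ?powR_ge0 ?S0 //.
by have := key_estimate_powR w d0 q_ge1.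
Qed.

Section PnormContinuity.
Variables (R : realType) (T : topologicalType).

Lemma continuous_bigsum (I : Type) (r : seq I) (P : pred I) (F : I -> T -> R) :
  (forall i, continuous (F i)) -> continuous (fun t => \sum_(i <- r | P i) F i t).
Proof.
move=> cF; elim: r => [|a r IH].
  by under eq_fun do rewrite big_nil; exact: cst_continuous.
under eq_fun do rewrite big_cons.
by case: (P a) => // x; apply: continuousD; [exact: cF | exact: IH].
Qed.

Lemma continuous_bigmax (I : Type) (r : seq I) (F : I -> T -> R) :
  (forall i, continuous (F i)) ->
  continuous (fun t => \big[Num.max/0]_(i <- r) F i t).
Proof.
move=> cF; elim: r => [|a r IH].
  by under eq_fun do rewrite big_nil; exact: cst_continuous.
under eq_fun do rewrite big_cons.
by move=> x; apply: continuous_max; [exact: cF | exact: IH].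
Qed.

(* t |-> g t ^ r is continuous for a continuous nonnegative g and r > 0:
   away from 0 powR is differentiable, at 0 use the explicit modulus
   e ^ (1 / r). *)
Lemma continuous_powR_comp (g : T -> R) (r : R) : 0 < r ->
  (forall t, 0 <= g t) -> continuous g -> continuous (fun t => g t `^ r).
Proof.
move=> r0 g0 cg x; have [gx0|gxn0] := eqVneq (g x) 0; last first.
  have gxp : 0 < g x by rewrite lt0r gxn0 g0.
  have powR_cont : {for g x, continuous (fun a : R => a `^ r)}.
    apply/differentiable_continuous/derivable1_diffP/derivable_powR.
    by rewrite in_itv /= andbT.
  exact: continuous_comp (cg x) powR_cont.
apply/cvgrPdist_le => e e0.
have e'0 : 0 < e `^ r^-1 by rewrite powR_gt0.
have : \forall t \near x, `|g x - g t| < e `^ r^-1.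
  exact: (proj1 (cvgrPdist_lt _ _) (cg x)).
apply: filterS => t.
rewrite gx0 powR0 ?gt_eqF // !sub0r !normrN (ger0_norm (g0 t)).
rewrite ger0_norm ?powR_ge0 //.
move=> gte; have -> : e = (e `^ r^-1) `^ r.
  by rewrite -powRrM mulVf ?gt_eqF ?powRr1 ?ltW.
by apply: ge0_ler_powR; rewrite ?nnegrE ?powR_ge0 ?(ltW r0) ?(ltW gte).
Qed.

Lemma continuous_pnorm (p : \bar R) k (G : T -> 'rV[R]_k) : (1 <= p)%E ->
  (forall j, continuous (fun t => G t 0 j)) -> continuous (fun t => pnorm p (G t)).
Proof.
move=> p1 cG.
have cA j : continuous (fun t => `|G t 0 j|).
  by move=> x; apply: (continuous_comp (cG j x)); exact: norm_continuous.
case: p p1 => [q| |] // p1; last by rewrite /pnorm eqxx; exact: continuous_bigmax.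
have q0 : 0 < q by rewrite (lt_le_trans ltr01) // -lee_fin.
apply: continuous_powR_comp; first by rewrite invr_gt0.
  by move=> t; apply: sumr_ge0 => *; rewrite powR_ge0.
by apply: continuous_bigsum => i; apply: continuous_powR_comp.
Qed.

End PnormContinuity.

Section FiniteConvexHull.
Variables (R : realType) (m : nat).

Definition simplex N : set 'rV[R]_N :=
  [set l | (forall i, 0 <= l 0 i <= 1) /\ \sum_(i < N) l 0 i = 1].
Arguments simplex : clear implicits.

Lemma simplex_compact N : compact (simplex N).
Proof.
have -> : simplex N = [set v : 'rV[R]_N | forall i, `[0, 1]%classic (v ord0 i)]
    `&` ((fun l : 'rV[R]_N => \sum_(i < N) l 0 i) @^-1` [set 1]).
  apply/seteqP; split => l /=.
    by move=> [h1 h2]; split => // i; rewrite in_itv /=; exact: h1.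
  by move=> [h1 h2]; split => // i; have := h1 i; rewrite in_itv.
apply: compact_closedI.
  apply: (@rV_compact _ _ (fun=> `[0, 1]%classic : set R)) => _.
  exact: segment_compact.
apply: preimage_closed; last exact: closed_eq.
by move=> x _; apply: continuous_bigsum => i; exact: coord_continuous.
Qed.

Lemma sum_fibers (V : nmodType) N N' (idx : 'I_N' -> 'I_N) (F : 'I_N' -> 'I_N -> V) :
  \sum_(i < N) \sum_(k < N' | idx k == i) F k i = \sum_(k < N') F k (idx k).
Proof.
under eq_bigr do rewrite big_mkcond.
rewrite exchange_big /=; apply: eq_bigr => k _.
by rewrite -big_mkcond /= (big_pred1 (idx k)) // => i; rewrite /= eq_sym.
Qed.

Lemma conv_seq_simplex (s : seq 'rV[R]_m) z : Defs.conv [set` s] z ->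
  exists2 l : 'rV[R]_(size s), simplex (size s) l &
    z = \sum_(i < size s) l 0 i *: nth 0 s i.
Proof.
move=> [N' [w [a [w0 [w1 [aA ->]]]]]].
pose idx k : 'I_(size s) := Ordinal (etrans (index_mem (a k) s) (aA k)).
have idxE k : nth 0 s (idx k) = a k by rewrite nth_index //; exact: aA.
exists (\row_i \sum_(k < N' | idx k == i) w k); first split.
- move=> i; rewrite mxE sumr_ge0 //=.
  rewrite -w1 [X in _ <= X](bigID (fun k => idx k == i)) /= lerDl.
  exact: sumr_ge0.
- under eq_bigr do rewrite mxE.
  by rewrite (sum_fibers idx (fun k _ => w k)).
- under [RHS]eq_bigr do rewrite mxE scaler_suml.
  rewrite (sum_fibers idx (fun k i => w k *: nth 0 s i)).
  by apply: eq_bigr => k _; rewrite idxE.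
Qed.

(* The p-distance from y to the convex hull of a finite set A is attained:
   it is the minimum over the compact simplex of a continuous function. *)
Lemma conv_finite_dist_attained (p : \bar R) (A : set 'rV[R]_m) (y : 'rV[R]_m)
    (r : R) : (1 <= p)%E -> finite_set A ->
  (forall e, 0 < e -> exists2 z, Defs.conv A z & pnorm p (y - z) <= r + e) ->
  exists2 z, Defs.conv A z & pnorm p (y - z) <= r.
Proof.
move=> p1 /finite_seqP[s ->] approx.
pose Phi (l : 'rV[R]_(size s)) := \sum_(i < size s) l 0 i *: nth 0 s i.
pose f l := pnorm p (y - Phi l).
have f_cont : continuous f.
  apply: continuous_pnorm => // j.
  have -> : (fun l => (y - Phi l) 0 j) =
            (fun l => y 0 j - \sum_(i < size s) l 0 i * nth 0 s i 0 j).
    apply: funext => l; rewrite !mxE summxE; congr (_ - _).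
    by apply: eq_bigr => i _; rewrite mxE.
  have sum_cont : continuous
      (fun l : 'rV[R]_(size s) => \sum_(i < size s) l 0 i * nth 0 s i 0 j).
    apply: continuous_bigsum => i t.
    have coord_cont := @coord_continuous R 1 (size s) 0 i t.
    by have := continuousM coord_cont (@cst_continuous _ _ (nth 0 s i 0 j) t).
  by move=> t; apply: continuousB; [exact: cst_continuous | exact: sum_cont].
have [z0 cz0 _] := approx 1 ltr01.
have [l0 Dl0 _] := conv_seq_simplex cz0.
have [ls Dls f_min] := EVT_min_rV (ex_intro _ l0 Dl0) (@simplex_compact (size s))
  (continuous_subspaceT f_cont).
exists (Phi ls).
  move: Dls; rewrite inE => -[Dls1 Dls2].
  exists (size s), (fun i => ls 0 i), (nth 0 s); do !split => //.
    by move=> i; case/andP: (Dls1 i).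
  by move=> i; exact: mem_nth.
apply/ler_addgt0Pr => e e0; have [z cz hz] := approx e e0.
have [l Dl zE] := conv_seq_simplex cz; rewrite zE in hz.
exact: le_trans (f_min l (mem_set Dl)) hz.
Qed.

End FiniteConvexHull.

Section FromMOCPtoCP.
Variables (R : realType) (n m : nat) (p : \bar R).
Hypothesis p_ge1 : (1 <= p)%E.

Lemma normQ_ge0 : 0 <= normQ p m.
Proof. by case: p p_ge1 => [q| |] // _; rewrite /normQ /= ?powR_ge0 ?ler0n. Qed.

Lemma hausdorff_approx k (U V : set 'rV[R]_k) (eps : R) u :
  (hausdorff p U V <= eps%:E)%E -> U u ->
  forall e, 0 < e -> exists2 v, V v & pnorm p (u - v) < eps + e.
Proof.
move=> hUV Uu e e0.
have : (ereal_inf [set (pnorm p (u - v))%:E | v in V] < (eps + e)%:E)%E.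
  apply: le_lt_trans (_ : (_ <= eps%:E)%E) _; last by rewrite lte_fin ltrDl.
  move: hUV; rewrite /hausdorff ge_max => /andP[+ _]; apply: le_trans.
  by apply: ereal_sup_ubound; exists u.
by move=> /ereal_inf_lt[_ [v Vv <-]]; rewrite lte_fin; exists v.
Qed.

Lemma Pmap_upper_image (S : set ('rV[R]_n * 'rV[R]_m)) x y :
  S (x, y) -> upper_image S (Qmap y).
Proof.
move=> Sxy; apply: subset_closure.
exists (Pmap (x, y)); first by exists (x, y).
by exists 0; [move=> i; rewrite mxE | rewrite addr0].
Qed.

(* Since Q is linear, conv P[Sbar] is the image under Q of conv proj_y[Sbar]. *)
Lemma conv_Pmap (Sbar : set ('rV[R]_n * 'rV[R]_m)) c :
  Defs.conv (@Pmap R n m @` Sbar) c ->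
  exists2 z, Defs.conv (snd @` Sbar) z & c = Qmap z.
Proof.
move=> [N [w [a [w0 [w1 [aP ->]]]]]].
have /choice[pre pre_spec] k : exists b, Sbar b /\ Pmap b = a k.
  by have [b Sb <-] := aP k; exists b.
exists (\sum_(k < N) w k *: (pre k).2).
  exists N, w, (fun k => (pre k).2); do 3!split => //; move=> k.
  by exists (pre k); case: (pre_spec k).
rewrite linear_sum; apply: eq_bigr => k _.
by rewrite linearZ; case: (pre_spec k) => _ <-.
Qed.

Lemma approx_cp_solution (S Sbar : set ('rV[R]_n * 'rV[R]_m)) (eps : R) y :
  (hausdorff p (upper_image S)
     (Defs.msum (Defs.conv (@Pmap R n m @` Sbar)) (@orthant R (m + 1)))
     <= eps%:E)%E ->
  Yset S y -> forall e, 0 < e ->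
  exists2 z, Defs.conv (snd @` Sbar) z & pnorm p (y - z) <= normQ p m * eps + e.
Proof.
move=> hd [[x y'] Sxy /= <-] e e0.
have nQ1 : 0 < normQ p m + 1 by rewrite ltr_wpDl ?normQ_ge0.
(* approximate Q y within de, so that ||Q|| (eps + de) <= ||Q|| eps + e *)
set de := e / (normQ p m + 1); have de0 : 0 < de by rewrite divr_gt0.
have [v [c cP [d d0 cdv]] dist_lt] := hausdorff_approx hd (Pmap_upper_image Sxy) de0.
have [z cz cQ] := conv_Pmap cP.
exists z => //; rewrite -cdv cQ opprD addrA in dist_lt.
have := @pnorm_le_normQ R p m (y' - z) d p_ge1 d0.
rewrite linearB => /le_trans; apply.
have -> : e = (normQ p m + 1) * de by rewrite /de mulrC divfK ?gt_eqF.
have := ler_wpM2l normQ_ge0 (ltW dist_lt); have := ltW de0; nra.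
Qed.

End FromMOCPtoCP.

Theorem mainTheorem17 (R : realType) (n m : nat)
  (S : set ('rV[R]_n * 'rV[R]_m)) (p : \bar R) (Sbar : set ('rV[R]_n * 'rV[R]_m))
  (eps : R) :
  convex_set2 S -> mocp_bounded S -> (1 <= p)%E ->
  hausdorff_finite_sol p S Sbar eps ->
  cp_finite_sol p S Sbar (normQ p m * eps).
Proof.
move=> _ _ p1 [Sbar_ne Sbar_fin Sbar_sub hd]; split => // y Yy.
have [z cz dist_z] := conv_finite_dist_attained p1 (finite_image snd Sbar_fin)
  (approx_cp_solution p1 hd Yy).
by exists z => //; exists (y - z); rewrite // addrC subrK.
Qed.
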